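(* Let $G_1,\dots,G_k$ be finitely many graphs which are pairwise consistent, and let $\overline r_1,\dots,\overline r_k$ be pairwise consistent rotation sequences such that the graphs $\overline r_1G_1,\dots,\overline r_kG_k$ are pairwise consistent. Then there exists a rotation sequence $\overline r$ such that $$\bigcup_{i=1}^k\overline r_iG_i=\overline r\bigcup_{i=1}^kG_i.$$
   Context: Fix $n\ge1$, ports $\pi=\{0,\dots,n+1\}$, gluings the odd permutations of $\pi$. A graph $G$ has vertices $V(G)$, semi-edges $S(G)$ (elements $(u\!:\!p)$) and edges $E(G)$ (elements $(u\!:\!p,\gamma,v\!:\!q)$) such that: no $u\!:\!p$ is both a semi-edge and the start of an edge; at most one edge starts at each $u\!:\!p$; each vertex has exactly $n+1$ ports appearing in semi-edges or edges; if $(u\!:\!p,\gamma,v\!:\!q)$ is an edge then $\gamma$ maps the ports of $u$ onto those of $v$, $\gamma(p)=q$, and $(v\!:\!q,\gamma^{-1},u\!:\!p)$ is an edge. Graphs $G,H$ are consistent iff for all $u\in V(G)\cap V(H)$, $i\in\pi$, $v\in V(G)\cup V(H)$, $j\in\pi$ and gluing $\gamma$: ($(u\!:\!i,\gamma,v\!:\!j)\in E(G)$ or $(u\!:\!i)\in S(G)$) iff ($(u\!:\!i,\gamma,v\!:\!j)\in E(H)$ or $(u\!:\!i)\in S(H)$). The union of consistent graphs is taken componentwise on vertices, edges and semi-edges. For a vertex $u$ and an even permutation $\rho$ of $\pi$, the vertex rotation $\rho_u$ replaces each edge $(u\!:\!p,\gamma,v\!:\!q)$ by $(u\!:\!\rho(p),\gamma\circ\rho^{-1},v\!:\!q)$,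 each edge $(v\!:\!q,\gamma^{-1},u\!:\!p)$ by $(v\!:\!q,\rho\circ\gamma^{-1},u\!:\!\rho(p))$, each semi-edge $(u\!:\!p)$ by $(u\!:\!\rho(p))$, leaving the rest unchanged. A rotation sequence is a finite composition of vertex rotations. Since vertex rotations at distinct vertices commute, for a rotation sequence $\overline r$ and a vertex $u$ one defines $(\overline r/u)$ as the ordered composite of the vertex rotations of $\overline r$ acting at $u$. Two rotation sequences $\overline r_1,\overline r_2$ are consistent iff $(\overline r_1/u)=(\overline r_2/u)$ for every vertex $u$ on which both act. *)

From mathcomp Require Import all_boot all_order all_fingroup.
Set Implicit Arguments. Unset Strict Implicit. Unset Printing Implicit Defensive.

Section Graphs.
Variables (n : nat) (V : eqType).

Definition port := 'I_n.+2.
Definition gluing (g : {perm port}) : bool := odd_perm g.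

(* A (pre)graph: vertices, semi-edges (u:p), edges (u:p, gamma, v:q). *)
Record graph := Graph {
  gV : V -> Prop;
  gS : V -> port -> Prop;
  gE : V -> port -> {perm port} -> V -> port -> Prop }.

Definition used (G : graph) (u : V) (p : port) : Prop :=
  gS G u p \/ exists g v q, gE G u p g v q.

Definition is_graph (G : graph) : Prop :=
  (forall u p, gS G u p -> gV G u) /\
  (forall u p g v q, gE G u p g v q -> [/\ gV G u, gV G v & gluing g]) /\
  (forall u p g v q, gS G u p -> ~ gE G u p g v q) /\
  (forall u p g v q g' v' q', gE G u p g v q -> gE G u p g' v' q' ->
       [/\ g = g', v = v' & q = q']) /\
  (forall u, gV G u -> exists P : {set port},
       #|P| = n.+1 /\ forall p, p \in P <-> used G u p) /\
  (forall u p g v q, gE G u p g v q ->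
       [/\ forall p', used G u p' <-> used G v (g p'),
           g p = q & gE G v q g^-1 u p]).

Definition consistent (G H : graph) : Prop :=
  forall u i v j g, gV G u -> gV H u -> (gV G v \/ gV H v) -> gluing g ->
    ((gE G u i g v j \/ gS G u i) <-> (gE H u i g v j \/ gS H u i)).

Definition union (G H : graph) : graph :=
  Graph (fun u => gV G u \/ gV H u)
        (fun u p => gS G u p \/ gS H u p)
        (fun u p g v q => gE G u p g v q \/ gE H u p g v q).

Definition bigunion (k : nat) (G : 'I_k -> graph) : graph :=
  Graph (fun u => exists i, gV (G i) u)
        (fun u p => exists i, gS (G i) u p)
        (fun u p g v q => exists i, gE (G i) u p g v q).

Definition loc (u : V) (rho : {perm port}) (x : V) : {perm port} :=
  if x == u then rho else 1%g.

(* rho_u: edge (a:p, g, b:q) becomes (a:f_a p, f_b o g o f_a^-1, b:f_b q)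
   where f_u = rho and f_x = id otherwise; semi-edge (u:p) becomes (u:rho p). *)
Definition vrot (u : V) (rho : {perm port}) (G : graph) : graph :=
  Graph (gV G)
        (fun a p' => exists p, gS G a p /\ p' = loc u rho a p)
        (fun a p' g' b q' => exists p g q, [/\ gE G a p g b q,
              p' = loc u rho a p, q' = loc u rho b q &
              g' = ((loc u rho a)^-1 * g * loc u rho b)%g]).

Definition rotseq := seq (V * {perm port}).
Definition is_rotseq (r : rotseq) : bool := all (fun x => ~~ odd_perm x.2) r.

Definition rapply (r : rotseq) (G : graph) : graph :=
  foldl (fun H x => vrot x.1 x.2 H) G r.

Definition acts (r : rotseq) (u : V) : bool := has (fun x => x.1 == u) r.

(* (r/u): ordered composite of the rotations of r at u.  In mathcomp,
   (s * t) x = t (s x), so the list-ordered product is the composite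
   "last o ... o first". *)
Definition rdiv (r : rotseq) (u : V) : {perm port} :=
  (\prod_(x <- r | x.1 == u) x.2)%g.

Definition rconsistent (r1 r2 : rotseq) : Prop :=
  forall u, acts r1 u -> acts r2 u -> rdiv r1 u = rdiv r2 u.

End Graphs.

From mathcomp Require Import all_boot all_order all_fingroup.
From mathcomp Require Import boolp.

(* A rotation sequence r acts on a graph as the simultaneous relabelling that
   rotates every vertex a by (r/a).  Rotate each vertex a of the union as in
   the first component G_i containing it, i.e. by (r_i/a).  Consistency of the
   G_i makes a shared vertex carry the same semi-edges and edges in every
   component containing it, and puts both endpoints of an edge in the same
   components, so that they are rotated by the same r_i; consistency of the
   r_i G_i gives the same transfer on the rotated side.  This labelling is even
   and trivial away from the finitely many vertices moved by some r_i, hence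
   it is realised by a single rotation sequence. *)

Set Implicit Arguments. Unset Strict Implicit. Unset Printing Implicit Defensive.

Local Open Scope group_scope.

Section Graphs.
Variables (n : nat) (V : eqType).
Local Notation graph := (graph n V).
Local Notation port := (port n).

Lemma graph_ext (A B : graph) :
  (forall u, gV A u <-> gV B u) ->
  (forall u p, gS A u p <-> gS B u p) ->
  (forall u p g v q, gE A u p g v q <-> gE B u p g v q) -> A = B.
Proof.
case: A B => VA SA EA [VB SB EB] /= eqV eqS eqE.
have -> : VA = VB by apply/funext => u; apply/propext.
have -> : SA = SB by apply/funext => u; apply/funext => p; apply/propext.
suff -> : EA = EB by [].
by do 4 apply/funext => ?; apply/funext => q; apply/propext.
Qed.

Definition relabel (f : V -> {perm port}) (G : graph) : graph :=
  Graph (gV G) (fun a p => gS G a ((f a)^-1 p))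
        (fun a p g b q => gE G a ((f a)^-1 p) (f a * g * (f b)^-1) b ((f b)^-1 q)).

Lemma relabel1 (G : graph) : relabel (fun=> 1) G = G.
Proof. by apply: graph_ext => //= *; rewrite invg1 !perm1 ?mulg1 ?mul1g. Qed.

Lemma relabelM (f h : V -> {perm port}) (G : graph) :
  relabel f (relabel h G) = relabel (fun a => h a * f a) G.
Proof. by apply: graph_ext => //= *; rewrite !invMg !permM ?mulgA. Qed.

Lemma eq_relabel (f h : V -> {perm port}) (G : graph) :
  f =1 h -> relabel f G = relabel h G.
Proof. by move=> /funext ->. Qed.

Lemma vrot_relabel (u : V) (rho : {perm port}) (G : graph) :
  vrot u rho G = relabel (loc u rho) G.
Proof.
apply: graph_ext => //= [a p'|a p' g' b q']; split.
- by case=> p [Sp ->]; rewrite permK.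
- by exists ((loc u rho a)^-1 p'); rewrite permKV.
- by case=> p [g [q [Epgq -> -> ->]]]; rewrite !permK !mulgA mulgV mul1g mulgK.
- move=> E; exists ((loc u rho a)^-1 p'), (loc u rho a * g' * (loc u rho b)^-1),
    ((loc u rho b)^-1 q'); split; rewrite ?permKV //.
  by rewrite !mulgA mulVg mul1g mulgKV.
Qed.

Lemma rdiv_rcons (r : rotseq n V) x a :
  rdiv (rcons r x) a = rdiv r a * loc x.1 x.2 a.
Proof. by rewrite /rdiv big_rcons /loc eq_sym; case: eqP => _ //; rewrite mulg1. Qed.

Lemma rapply_relabel (r : rotseq n V) (G : graph) :
  rapply r G = relabel (rdiv r) G.
Proof.
elim/last_ind: r => [|r x IH].
  by rewrite -[LHS]relabel1; apply: eq_relabel => a; rewrite /rdiv big_nil.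
rewrite /rapply foldl_rcons -/(rapply r G) IH vrot_relabel relabelM.
by apply: eq_relabel => a; rewrite rdiv_rcons.
Qed.

Lemma rdiv_even (r : rotseq n V) a : is_rotseq r -> ~~ odd_perm (rdiv r a).
Proof.
move=> /allP even_r; rewrite /rdiv big_seq_cond.
apply: (big_ind (fun s : {perm port} => ~~ odd_perm s)) => [||x /andP[/even_r //]].
- by rewrite odd_perm1.
- by move=> s t es et; rewrite odd_permM (negbTE es) (negbTE et).
Qed.

Record wf_graph (A : graph) : Prop := WfGraph {
  semi_edge_vertex : forall u p, gS A u p -> gV A u;
  edge_vertices : forall u p g v q,
    gE A u p g v q -> [/\ gV A u, gV A v & gluing g];
  semi_edge_not_edge : forall u p g v q, gS A u p -> ~ gE A u p g v q;
  edge_unique : forall u p g v q g' v' q', gE A u p g v q -> gE A u p g' v' q' ->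
    [/\ g = g', v = v' & q = q'] }.

Definition edge_sym (A : graph) : Prop :=
  forall u p g v q, gE A u p g v q -> gE A v q g^-1 u p.

Lemma is_graph_wf (A : graph) : is_graph A -> wf_graph A.
Proof. by case=> SV [EV [SE [E1 _]]]; split. Qed.

Lemma is_graph_edge_sym (A : graph) : is_graph A -> edge_sym A.
Proof. by case=> _ [_ [_ [_ [_ Esym]]]] u p g v q /Esym[]. Qed.

Lemma wf_relabel (f : V -> {perm port}) (A : graph) :
  (forall a, ~~ odd_perm (f a)) -> wf_graph A -> wf_graph (relabel f A).
Proof.
move=> even_f [SV EV SE E1]; split=> /=.
- by move=> u p /SV.
- move=> u p g v q /EV[Au Av]; rewrite /gluing !odd_permM odd_permV.
  by rewrite (negbTE (even_f u)) (negbTE (even_f v)) addbF.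
- by move=> u p g v q /SE.
- move=> u p g v q g' v' q' /E1 E /E[eq_g eq_v eq_q]; subst v'; split=> //.
  + by move: eq_g => /mulIg /mulgI.
  + by move/(congr1 (f v)): eq_q; rewrite !permKV.
Qed.

Lemma consistent_semi_edge (A B : graph) u p : consistent A B -> wf_graph A ->
  gV A u -> gV B u -> gS B u p -> gS A u p.
Proof.
move=> cAB wfA Au Bu Sp.
(* Otherwise A has edges u:p -> u:j for every port j, against uniqueness. *)
have glu0 : gluing (tperm (ord0 : port) ord_max) by rewrite /gluing odd_tperm.
have loop j := proj2 (cAB u p u j _ Au Bu (or_introl Au) glu0) (or_intror Sp).
case: (loop ord0) (loop ord_max) => [E0 [Emax|//]|//].
by case: (edge_unique wfA E0 Emax) => _ _ /(congr1 val).
Qed.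

Lemma consistent_edge (A B : graph) u p g v q : consistent A B -> wf_graph A ->
  gV B u -> gE A u p g v q -> gE B u p g v q.
Proof.
move=> cAB wfA Bu E; have [Au Av glu] := edge_vertices wfA E.
case: (proj1 (cAB u p v q g Au Bu (or_introl Av) glu) (or_introl E)) => // Sp.
by case: (semi_edge_not_edge wfA (consistent_semi_edge cAB wfA Au Bu Sp) E).
Qed.

Section Family.
Variables (k : nat) (H : 'I_k -> graph).
Hypothesis wfH : forall i, wf_graph (H i).
Hypothesis cH : forall i j, i != j -> consistent (H i) (H j).

Lemma family_semi_edge i j u p : gV (H j) u -> gS (H i) u p -> gS (H j) u p.
Proof.
case: (eqVneq i j) => [-> //|ne] Hju Sp.
have cji := cH (contra_neq esym ne).
exact: consistent_semi_edge cji (wfH j) Hju (semi_edge_vertex (wfH i) Sp) Sp.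
Qed.

Lemma family_edge i j u p g v q :
  gV (H j) u -> gE (H i) u p g v q -> gE (H j) u p g v q.
Proof.
case: (eqVneq i j) => [-> //|ne] Hju E.
exact: consistent_edge (cH ne) (wfH i) Hju E.
Qed.

Definition owner (a : V) : option 'I_k := [pick i | `[< gV (H i) a >]].

Lemma ownerP i a : gV (H i) a -> exists2 i0, owner a = Some i0 & gV (H i0) a.
Proof.
rewrite /owner => Hia; case: pickP => [i0 /asboolP|/(_ i) /asboolP //].
by exists i0.
Qed.

Hypothesis symH : forall i, edge_sym (H i).

Lemma owner_edge j a p g b q : gE (H j) a p g b q -> owner a = owner b.
Proof.
move=> E; apply: eq_pick => i; apply/asboolP/asboolP => Hi.
- by have [] := edge_vertices (wfH i) (family_edge Hi E).
- by have [] := edge_vertices (wfH i) (family_edge Hi (symH E)).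
Qed.

End Family.

Section Gluing.
Variables (k : nat) (H : 'I_k -> graph) (f : 'I_k -> V -> {perm port}).
Hypothesis wfH : forall i, wf_graph (H i).
Hypothesis symH : forall i, edge_sym (H i).
Hypothesis cH : forall i j, i != j -> consistent (H i) (H j).
Hypothesis wfR : forall i, wf_graph (relabel (f i) (H i)).
Hypothesis cR : forall i j, i != j ->
  consistent (relabel (f i) (H i)) (relabel (f j) (H j)).

Definition owner_label (a : V) : {perm port} :=
  if owner H a is Some i then f i a else 1.

Lemma bigunion_relabel :
  bigunion (fun i => relabel (f i) (H i)) = relabel owner_label (bigunion H).
Proof.
rewrite /owner_label; apply: graph_ext => //= [a p|a p g b q]; split.
- case=> i Sp; have [i0 -> Hi0a] := ownerP (H := H) (semi_edge_vertex (wfR i) Sp).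
  by exists i0; apply: (family_semi_edge wfR cR Hi0a Sp).
- case=> j Sp; have [i0 own Hi0a] := ownerP (semi_edge_vertex (wfH j) Sp).
  by exists i0; move: Sp; rewrite own => /(family_semi_edge wfH cH Hi0a).
- case=> i E; have [Hia _ _] := edge_vertices (wfR i) E.
  have [i0 own Hi0a] := ownerP (H := H) Hia.
  have E0 := family_edge wfR cR Hi0a E.
  by exists i0; rewrite -(owner_edge wfH cH symH E0) own.
- case=> j E; have [Hja _ _] := edge_vertices (wfH j) E.
  have [i0 own Hi0a] := ownerP Hja.
  have own_ab := owner_edge wfH cH symH E.
  exists i0; move: E; rewrite -own_ab own.
  exact: (family_edge wfH cH Hi0a).
Qed.

End Gluing.

Lemma rdiv_out (r : rotseq n V) a : ~~ acts r a -> rdiv r a = 1.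
Proof.
move=> /hasPn not_at_a; rewrite /rdiv big1_seq // => x /andP[x_a /not_at_a].
by rewrite x_a.
Qed.

Lemma rotseq_realizes (W : seq V) (F : V -> {perm port}) :
  (forall a, ~~ odd_perm (F a)) -> (forall a, a \notin W -> F a = 1) ->
  exists2 r0 : rotseq n V, is_rotseq r0 & rdiv r0 =1 F.
Proof.
move=> even_F supp_F; exists [seq (x, F x) | x <- undup W].
  by apply/allP => _ /mapP[x _ ->]; apply: even_F.
move=> a; rewrite /rdiv big_map /= -big_filter.
have [aW|aW] := boolP (a \in W).
  rewrite (@eq_filter _ _ (pred1 a)) // filter_pred1_uniq ?undup_uniq ?mem_undup //.
  by rewrite big_seq1.
rewrite supp_F // big1_seq // => x; rewrite mem_filter mem_undup.
by case/and3P => _ /eqP ->; rewrite (negbTE aW).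
Qed.

End Graphs.

Theorem mainTheorem9 (n : nat) (V : eqType) (k : nat)
    (G : 'I_k -> graph n V) (r : 'I_k -> rotseq n V) :
  1 <= n ->
  (forall i, is_graph (G i)) ->
  (forall i, is_rotseq (r i)) ->
  (forall i j, i != j -> consistent (G i) (G j)) ->
  (forall i j, i != j -> rconsistent (r i) (r j)) ->
  (forall i j, i != j -> consistent (rapply (r i) (G i)) (rapply (r j) (G j))) ->
  exists r0 : rotseq n V, is_rotseq r0 /\
    bigunion (fun i => rapply (r i) (G i)) = rapply r0 (bigunion G).
Proof.
move=> _ graph_G rot_r cG _ cR.
have wfG i := is_graph_wf (graph_G i).
set F := owner_label G (fun i => rdiv (r i)).
set W := flatten [seq map fst (r i) | i <- enum 'I_k].
have even_F a : ~~ odd_perm (F a).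
  by rewrite /F /owner_label; case: owner => [i|]; [exact: rdiv_even | rewrite odd_perm1].
have supp_F a : a \notin W -> F a = 1.
  rewrite /F /owner_label; case: owner => // i aW; apply: rdiv_out.
  apply: contra aW => /hasP[x xr /eqP <-]; apply/flattenP; exists (map fst (r i)).
    by apply: map_f; rewrite mem_enum.
  exact: map_f.
have [r0 rot_r0 rdiv_r0] := rotseq_realizes even_F supp_F.
exists r0; split=> //.
rewrite rapply_relabel (eq_relabel _ rdiv_r0).
under eq_fun do rewrite rapply_relabel.
apply: bigunion_relabel => // [i|i|i j /cR]; last by rewrite !rapply_relabel.
- exact: is_graph_edge_sym.
- by apply: wf_relabel => // a; apply: rdiv_even.
Qed.
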